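(* Consider online bilateral trade with one seller of fixed unknown cost $c\in[0,1]$ and one buyer of fixed unknown value $v\in[0,1]$, where $v>c$, over $T$ rounds. Run the following algorithm (Optimistic-Binary-Search), which posts a single price each round. Maintain numbers $\ell_t,u_t$ with $\ell_1=0$, $u_1=1$. In round $t$ (exploration phase) post the single price $p_t=(\ell_t+u_t)/2$ to both traders. If both traders accept, the algorithm posts this same price $p_t$ in every remaining round (exploitation phase). If the seller rejects, set $\ell_{t+1}=p_t$, $u_{t+1}=u_t$; otherwise (the buyer rejects) set $\ell_{t+1}=\ell_t$, $u_{t+1}=p_t$. Then the cumulative gains-from-trade regret of this algorithm is at most $1$, for every $T$.
   Context: Trading model: in each round a price is posted; the seller accepts a price $p$ iff $p\ge c$ and the buyer accepts a price $p$ iff $p\le v$ (ties are broken in favour of accepting). A trade occurs iff both accept, producing gains-from-trade $v-c$; otherwise the gains-from-trade of the round is $0$. The benchmark is the optimal per-round gains-from-trade $v-c$, and the cumulative regret is $\sum_{t=1}^T\big((v-c)-\mathrm{GFT}_t\big)$, where $\mathrm{GFT}_t$ is the gains-from-trade realized in round $t$. *)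

From Stdlib Require Import Reals Lra.
Open Scope R_scope.

Definition seller_accepts (c p : R) : Prop := c <= p.
Definition buyer_accepts (v p : R) : Prop := p <= v.

Definition gft (c v p : R) : R :=
  if Rle_dec c p then (if Rle_dec p v then v - c else 0) else 0.

Inductive obs_state : Type :=
| Explore (l u : R)
| Exploit (p : R).

Definition obs_price (s : obs_state) : R :=
  match s with
  | Explore l u => (l + u) / 2
  | Exploit p => p
  end.

Definition obs_step (c v : R) (s : obs_state) : obs_state :=
  match s with
  | Explore l u =>
      let p := (l + u) / 2 in
      if Rle_dec c p then
        (if Rle_dec p v then Exploit p
         else Explore l p)
      else Explore p u
  | Exploit p => Exploit p
  end.

(** State at round t (0-indexed: round t+1 of the paper), with l_1 = 0, u_1 = 1. *)
Fixpoint obs_state_at (c v : R) (t : nat) : obs_state :=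
  match t with
  | O => Explore 0 1
  | S t' => obs_step c v (obs_state_at c v t')
  end.

Definition obs_price_at (c v : R) (t : nat) : R := obs_price (obs_state_at c v t).

Fixpoint obs_regret (c v : R) (T : nat) : R :=
  match T with
  | O => 0
  | S T' => obs_regret c v T' + ((v - c) - gft c v (obs_price_at c v T'))
  end.

From Stdlib Require Import Reals Lra.
Open Scope R_scope.

(* While exploring, the interval [l, u] always contains [c, v], and a failed
   round costs v - c <= (u - l) / 2 while halving u - l.  Hence the regret so
   far plus the current width u - l never exceeds the initial width 1; once
   both traders accept, every later round realizes the full gain v - c. *)

Lemma gft_trade (c v p : R) : c <= p -> p <= v -> gft c v p = v - c.
Proof.
  intros Hcp Hpv; unfold gft.
  destruct (Rle_dec c p); [destruct (Rle_dec p v)|]; lra.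
Qed.

Lemma gft_nonneg (c v p : R) : c <= v -> 0 <= gft c v p.
Proof.
  intros Hcv; unfold gft.
  destruct (Rle_dec c p); [destruct (Rle_dec p v)|]; lra.
Qed.

Definition obs_invariant (c v : R) (s : obs_state) (regret : R) : Prop :=
  match s with
  | Explore l u => l <= c /\ v <= u /\ regret + (u - l) <= 1
  | Exploit p => c <= p /\ p <= v /\ regret <= 1
  end.

Lemma obs_invariant_step (c v : R) (s : obs_state) (regret : R) :
  c <= v -> obs_invariant c v s regret ->
  obs_invariant c v (obs_step c v s)
    (regret + ((v - c) - gft c v (obs_price s))).
Proof.
  intros Hcv Hinv.
  pose proof (gft_nonneg c v (obs_price s) Hcv) as Hgft.
  destruct s as [l u | p]; simpl in Hinv, Hgft |- *.
  - destruct (Rle_dec c ((l + u) / 2)) as [Hc | Hc].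
    + destruct (Rle_dec ((l + u) / 2) v) as [Hv | Hv]; simpl.
      * rewrite (gft_trade c v _ Hc Hv); lra.
      * lra.
    + simpl; lra.
  - rewrite (gft_trade c v p) by tauto; lra.
Qed.

Lemma obs_invariant_at (c v : R) (T : nat) :
  0 <= c -> v <= 1 -> c <= v ->
  obs_invariant c v (obs_state_at c v T) (obs_regret c v T).
Proof.
  intros Hc Hv Hcv.
  induction T as [| T IH].
  - simpl; lra.
  - exact (obs_invariant_step c v _ _ Hcv IH).
Qed.

Theorem theorem3p1 (c v : R) (T : nat) :
  0 <= c <= 1 -> 0 <= v <= 1 -> c < v ->
  obs_regret c v T <= 1.
Proof.
  intros Hc Hv Hcv.
  pose proof (obs_invariant_at c v T ltac:(lra) ltac:(lra) ltac:(lra)) as Hinv.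
  destruct (obs_state_at c v T); simpl in Hinv; lra.
Qed.
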